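(* Under the hypotheses and notation of the context (PQRS-form with $m\ge1$ and $S$ invertible self-adjoint), the scattering matrix admits, for all sufficiently small $k>0$, the convergent expansion $$\mathcal S(k)=-I^{(n)}+2M_Q\left(I^{(a)}+RR^*+QQ^*\right)^{-1}M_Q^*-2\mathrm ik\,X\left[\sum_{j=0}^\infty(\mathrm ik)^j\left(S^{-1}X^*X\right)^j\right]S^{-1}X^*,$$ and in particular $$\lim_{k\to0^+}\mathcal S(k)=-I^{(n)}+2M_Q\left(I^{(a)}+RR^*+QQ^*\right)^{-1}M_Q^*.$$
   Context: $I^{(j)}$ denotes the $j\times j$ identity matrix. Let $0\le r_A,r_B\le n$ with $m=r_A+r_B-n\ge1$, $a=n-r_A$, $b=n-r_B$, $S\in\mathbb C^{m\times m}$ invertible self-adjoint, $P\in\mathbb C^{m\times b}$, $Q\in\mathbb C^{a\times b}$, $R\in\mathbb C^{a\times m}$. The vertex coupling is given by the PQRS-form $B_{PQRS}\Psi'=A_{PQRS}\Psi$ with (block sizes $m,a,b$) $$B_{PQRS}=\begin{pmatrix} I^{(m)} & 0 & P\\ R & I^{(a)} & Q\\ 0&0&0\end{pmatrix},\qquad A_{PQRS}=\begin{pmatrix} S & -SR^* & 0\\ 0&0&0\\ -P^* & (RP-Q)^* & I^{(b)}\end{pmatrix};$$ its scattering matrix is $\mathcal S(k)=-(A+\mathrm ikB)^{-1}(A-\mathrm ikB)$, $k>0$, with $A=-A_{PQRS}$, $B=B_{PQRS}$. Further, $$M_Q=\begin{pmatrix}R^*\\ I^{(a)}\\ Q^*\end{pmatrix},\quad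 X=\begin{pmatrix}I^{(m)}\\0\\P^*\end{pmatrix}-M_Q\left(I^{(a)}+RR^*+QQ^*\right)^{-1}(R+QP^* ).$$ *)

From HB Require Import structures.
From mathcomp Require Import all_boot all_order all_algebra.
Set Implicit Arguments. Unset Strict Implicit. Unset Printing Implicit Defensive.
Import Order.TTheory GRing.Theory Num.Theory Num.Syntax.
Local Open Scope ring_scope.

Definition adjmx {C : numClosedFieldType} {p q : nat} (M : 'M[C]_(p, q)) : 'M[C]_(q, p) :=
  (map_mx Num.conj M)^T.

Section PQRS.
Variables (C : numClosedFieldType) (m a b : nat).
Variables (S : 'M[C]_m) (P : 'M[C]_(m, b)) (Q : 'M[C]_(a, b)) (R : 'M[C]_(a, m)).

(* 3x3 block matrix with block sizes m, a, b ; type 'M_(m + a + b) = 'M_((m+a)+b) *)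
Definition block3 {r1 r2 r3 c1 c2 c3 : nat}
  (X11 : 'M[C]_(r1,c1)) (X12 : 'M[C]_(r1,c2)) (X13 : 'M[C]_(r1,c3))
  (X21 : 'M[C]_(r2,c1)) (X22 : 'M[C]_(r2,c2)) (X23 : 'M[C]_(r2,c3))
  (X31 : 'M[C]_(r3,c1)) (X32 : 'M[C]_(r3,c2)) (X33 : 'M[C]_(r3,c3))
  : 'M[C]_(r1 + r2 + r3, c1 + c2 + c3) :=
  block_mx (block_mx X11 X12 X21 X22) (col_mx X13 X23) (row_mx X31 X32) X33.

Definition B_PQRS : 'M[C]_(m + a + b) :=
  block3 1%:M 0 P
         R 1%:M Q
         0 0 0.

Definition A_PQRS : 'M[C]_(m + a + b) :=
  block3 S (- (S *m adjmx R)) 0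
         0 0 0
         (- adjmx P) (adjmx (R *m P - Q)) 1%:M.

Definition scatt (k : C) : 'M[C]_(m + a + b) :=
  let A := - A_PQRS in
  - (invmx (A + ('i * k) *: B_PQRS) *m (A - ('i * k) *: B_PQRS)).

Definition M_Q : 'M[C]_(m + a + b, a) :=
  col_mx (col_mx (adjmx R) 1%:M) (adjmx Q).

Definition Kinv : 'M[C]_a :=
  invmx (1%:M + R *m adjmx R + Q *m adjmx Q).

Definition X_mx : 'M[C]_(m + a + b, m) :=
  col_mx (col_mx 1%:M 0) (adjmx P) - M_Q *m Kinv *m (R + Q *m adjmx P).

Definition scatt_lim : 'M[C]_(m + a + b) :=
  - 1%:M + 2%:R *: (M_Q *m Kinv *m adjmx M_Q).

Definition partial_series (k : C) (N : nat) : 'M[C]_m :=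
  \sum_(j < N) (('i * k) ^+ j *: (invmx S *m adjmx X_mx *m X_mx) ^+ j).

End PQRS.

Definition mx_seq_cvg {C : numClosedFieldType} {p q : nat}
  (u : nat -> 'M[C]_(p, q)) (L : 'M[C]_(p, q)) : Prop :=
  forall eps : C, 0 < eps -> exists N : nat, forall M : nat, (N <= M)%N ->
    forall i j, `|u M i j - L i j| < eps.

Definition mx_lim_0plus {C : numClosedFieldType} {p q : nat}
  (f : C -> 'M[C]_(p, q)) (L : 'M[C]_(p, q)) : Prop :=
  forall eps : C, 0 < eps -> exists delta : C, 0 < delta /\
    forall k : C, 0 < k -> k < delta -> forall i j, `|f k i j - L i j| < eps.

(* Put c = ik and M_c = -A + cB, the matrix inverted in S(k); let E1, E2, E3
   embed the three coordinate blocks, K = I + RR^H + QQ^H, V = R + QP^H and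
   E = (I; 0; P^H).  Row by row, B = E1 E^H + E2 M_Q^H; with M_Q^H X = 0 this gives
   B M_Q = E1 V^H + E2 K and B X = E1 X^H X, while A M_Q = 0 and A X = E1 S.
   So in the basis [X | M_Q | E3] the matrix M_c is block upper triangular with
   diagonal blocks -(S - c X^H X), cK, -I, and the identity
   B M_Q K^-1 M_Q^H + E1 X^H = B shows that Y = S(0) - 2c X (S - c X^H X)^-1 X^H
   solves M_c Y = A + cB, i.e. Y = S(k).  Finally S - c X^H X = S (I - c S^-1 X^H X),
   and for small k the Neumann series of c S^-1 X^H X converges in the entrywise
   l^1 norm to an inverse of norm at most 2m, which yields the expansion and
   |S(k) - S(0)| = O(k). *)

From HB Require Import structures.
From mathcomp Require Import all_boot all_order all_algebra.
Set Implicit Arguments. Unset Strict Implicit. Unset Printing Implicit Defensive.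
Import Order.TTheory GRing.Theory Num.Theory Num.Syntax.
Local Open Scope ring_scope.

Section Adjoint.
Variable C : numClosedFieldType.

Lemma adjmxK p q (M : 'M[C]_(p, q)) : adjmx (adjmx M) = M.
Proof. by apply/matrixP=> i j; rewrite !mxE conjCK. Qed.

Lemma adjmxM p q r (M : 'M[C]_(p, q)) (N : 'M[C]_(q, r)) :
  adjmx (M *m N) = adjmx N *m adjmx M.
Proof. by rewrite /adjmx map_mxM trmx_mul. Qed.

Lemma adjmxD p q (M N : 'M[C]_(p, q)) : adjmx (M + N) = adjmx M + adjmx N.
Proof. by rewrite /adjmx map_mxD linearD. Qed.

Lemma adjmxN p q (M : 'M[C]_(p, q)) : adjmx (- M) = - adjmx M.
Proof. by rewrite /adjmx map_mxN linearN. Qed.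

Lemma adjmxB p q (M N : 'M[C]_(p, q)) : adjmx (M - N) = adjmx M - adjmx N.
Proof. by rewrite adjmxD adjmxN. Qed.

Lemma adjmx0 p q : adjmx (0 : 'M[C]_(p, q)) = 0.
Proof. by apply/matrixP=> i j; rewrite !mxE conjC0. Qed.

Lemma adjmx1 p : adjmx (1%:M : 'M[C]_p) = 1%:M.
Proof. by apply/matrixP=> i j; rewrite !mxE conjC_nat eq_sym. Qed.

Lemma adjmx_col p1 p2 q (M : 'M[C]_(p1, q)) (N : 'M[C]_(p2, q)) :
  adjmx (col_mx M N) = row_mx (adjmx M) (adjmx N).
Proof. by rewrite /adjmx map_col_mx tr_col_mx. Qed.

Lemma adjmx_inv p (M : 'M[C]_p) : adjmx (invmx M) = invmx (adjmx M).
Proof. by rewrite /adjmx map_invmx trmx_inv. Qed.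

Lemma mulmx_adj_row_ge0 p (v : 'rV[C]_p) : 0 <= (v *m adjmx v) 0 0.
Proof. by rewrite mxE; apply: sumr_ge0 => j _; rewrite !mxE mul_conjC_ge0. Qed.

Lemma mulmx_adj_row_eq0 p (v : 'rV[C]_p) : ((v *m adjmx v) 0 0 == 0) = (v == 0).
Proof.
apply/eqP/eqP => [|->]; last by rewrite mul0mx mxE.
rewrite mxE => /psumr_eq0P vv0; apply/matrixP => i j; rewrite (ord1 i) mxE.
have /vv0 /(_ j isT) : forall l, true -> 0 <= v 0 l * adjmx v l 0.
  by move=> l _; rewrite !mxE mul_conjC_ge0.
by rewrite !mxE => /eqP; rewrite mul_conjC_eq0 => /eqP.
Qed.

Lemma unitmx_1_add_adj p q r (M : 'M[C]_(p, q)) (N : 'M[C]_(p, r)) :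
  1%:M + M *m adjmx M + N *m adjmx N \in unitmx.
Proof.
rewrite unitmxE unitfE; apply/negP => /det0P [v /negPf nz0].
move=> /(congr1 (mulmx^~ (adjmx v))); rewrite mul0mx.
rewrite !mulmxDr mulmx1 !mulmxDl !mulmxA -(mulmxA (v *m M)) -(mulmxA (v *m N)).
rewrite -!adjmxM => /matrixP /(_ 0 0) /eqP; rewrite mxE [X in X + _]mxE [X in _ == X]mxE.
rewrite paddr_eq0 ?addr_ge0 ?mulmx_adj_row_ge0 // paddr_eq0 ?mulmx_adj_row_ge0 //.
by rewrite mulmx_adj_row_eq0 nz0.
Qed.
End Adjoint.

Section SquareMatrices.
Variables (R : comUnitRingType) (n : nat).

Lemma invmxM (A B : 'M[R]_n) : A \in unitmx -> B \in unitmx ->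
  invmx (A *m B) = invmx B *m invmx A.
Proof.
move=> A_unit B_unit; have AB_unit : A *m B \in unitmx by rewrite unitmx_mul A_unit.
by rewrite -[RHS](mulKmx AB_unit) -!mulmxA (mulmxA B) mulmxV // mul1mx mulmxV // mulmx1.
Qed.

Lemma exprZmx c (A : 'M[R]_n) j :
  (c *: A) ^+ j = c ^+ j *: A ^+ j.
Proof.
elim: j => [|j IHj]; first by rewrite !expr0 scale1r.
by rewrite !exprS IHj -!mulmxE -scalemxAl -scalemxAr scalerA.
Qed.

End SquareMatrices.

Section EntrywiseNorm.
Variable R : numDomainType.

Definition mxnorm p q (A : 'M[R]_(p, q)) : R := \sum_i \sum_j `|A i j|.

Lemma ler_sum_term (I : finType) (F : I -> R) i :
  (forall j, 0 <= F j) -> F i <= \sum_j F j.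
Proof. by move=> F_ge0; rewrite (bigD1 i) //= lerDl sumr_ge0. Qed.

Lemma mxnorm_ge0 p q (A : 'M[R]_(p, q)) : 0 <= mxnorm A.
Proof. by rewrite sumr_ge0 // => i _; rewrite sumr_ge0. Qed.

Lemma ler_mxnorm_entry p q (A : 'M[R]_(p, q)) i j : `|A i j| <= mxnorm A.
Proof.
apply: le_trans (ler_sum_term _ _) => [|l]; last by rewrite sumr_ge0.
exact: ler_sum_term.
Qed.

Lemma mxnorm_eq0 p q (A : 'M[R]_(p, q)) : mxnorm A = 0 -> A = 0.
Proof.
move=> A0; apply/matrixP => i j; rewrite mxE; apply/eqP; rewrite -normr_eq0.
by rewrite eq_le normr_ge0 andbT -A0 ler_mxnorm_entry.
Qed.

Lemma ler_mxnormD p q (A B : 'M[R]_(p, q)) : mxnorm (A + B) <= mxnorm A + mxnorm B.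
Proof.
rewrite -big_split ler_sum //= => i _; rewrite -big_split ler_sum //= => j _.
by rewrite mxE ler_normD.
Qed.

Lemma mxnormN p q (A : 'M[R]_(p, q)) : mxnorm (- A) = mxnorm A.
Proof. by apply: eq_bigr => i _; apply: eq_bigr => j _; rewrite mxE normrN. Qed.

Lemma mxnormZ p q c (A : 'M[R]_(p, q)) : mxnorm (c *: A) = `|c| * mxnorm A.
Proof.
rewrite mulr_sumr; apply: eq_bigr => i _; rewrite mulr_sumr.
by apply: eq_bigr => j _; rewrite mxE normrM.
Qed.

Lemma ler_mxnormM p q r (A : 'M[R]_(p, q)) (B : 'M[R]_(q, r)) :
  mxnorm (A *m B) <= mxnorm A * mxnorm B.
Proof.
rewrite /mxnorm [X in _ <= _ * X]exchange_big big_distrl ler_sum //= => i _.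
rewrite big_distrr ler_sum //= => j _; rewrite mxE big_distrl /=.
apply: le_trans (ler_norm_sum _ _ _) _; apply: ler_sum => l _.
by rewrite normrM ler_pM // (ler_sum_term (F := fun l => `|B l j|)).
Qed.

Lemma mxnorm1 p : mxnorm (1%:M : 'M[R]_p) = p%:R.
Proof.
rewrite /mxnorm (eq_bigr (fun=> 1)) ?sumr_const ?card_ord // => i _.
rewrite (bigD1 i) //= big1 ?addr0 => [|j /negPf ij]; rewrite mxE ?eqxx ?normr1 //.
by rewrite eq_sym ij normr0.
Qed.

End EntrywiseNorm.

Section Neumann.
Variables (R : numFieldType) (p : nat) (G : 'M[R]_p).
Hypothesis G_small : 2 * mxnorm G <= 1.

Lemma unitmx_1_sub : 1%:M - G \in unitmx.
Proof.
rewrite unitmxE unitfE; apply/negP => /det0P [v /negPf nz0].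
rewrite mulmxBr mulmx1 => /eqP; rewrite subr_eq0 => /eqP vG.
suff /mxnorm_eq0 v0 : mxnorm v = 0 by rewrite v0 eqxx in nz0.
apply/eqP; rewrite eq_le mxnorm_ge0 andbT.
have : 2 * mxnorm v <= mxnorm v.
  apply: le_trans (_ : 2 * (mxnorm v * mxnorm G) <= _).
    by rewrite ler_pM2l ?ltr0n // {1}vG ler_mxnormM.
  by rewrite mulrCA ler_piMr ?mxnorm_ge0.
by rewrite mulr_natl mulr2n gerDl.
Qed.

Lemma ler_mxnorm_inv : mxnorm (invmx (1%:M - G)) <= 2 * p%:R.
Proof.
set D := invmx _.
have D_fix : D = 1%:M + G *m D.
  by rewrite -[X in X + _](mulmxV unitmx_1_sub) mulmxBl mul1mx subrK.
have : mxnorm D <= p%:R + mxnorm G * mxnorm D.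
  rewrite {1}D_fix -(mxnorm1 R p); apply: le_trans (ler_mxnormD _ _) _.
  by rewrite lerD2l ler_mxnormM.
move=> D_le; have : 2 * mxnorm D <= 2 * p%:R + mxnorm D.
  apply: le_trans (_ : 2 * (p%:R + mxnorm G * mxnorm D) <= _).
    by rewrite ler_pM2l ?ltr0n.
  by rewrite mulrDr lerD2l mulrA ler_piMl ?mxnorm_ge0.
by rewrite mulr_natl mulr2n lerD2r.
Qed.

Lemma neumann_partial_sum N :
  \sum_(j < N) G ^+ j = invmx (1%:M - G) - invmx (1%:M - G) *m G ^+ N.
Proof.
have telescope : (1%:M - G) *m \sum_(j < N) G ^+ j = 1%:M - G ^+ N.
  by rewrite mulmxE -opprB mulNr -subrX1 opprB.
by rewrite -[LHS](mulKmx unitmx_1_sub) telescope mulmxBr mulmx1.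
Qed.

Lemma mxnorm_exp_le N : mxnorm (G ^+ N) * 2 ^+ N <= p%:R.
Proof.
elim: N => [|N IHN]; first by rewrite !expr0 mulr1 -(mxnorm1 R p).
rewrite exprSr [2 ^+ N.+1]exprSr -mulmxE.
apply: le_trans (_ : mxnorm (G ^+ N) * mxnorm G * (2 ^+ N * 2) <= _).
  by rewrite ler_wpM2r ?mulr_ge0 ?exprn_ge0 ?ler0n ?ler_mxnormM.
rewrite mulrACA; apply: le_trans IHN.
by rewrite ler_piMr ?mulr_ge0 ?exprn_ge0 ?mxnorm_ge0 // mulrC.
Qed.

End Neumann.

Lemma neumann_cvg (C : archiClosedFieldType) p (G : 'M[C]_p) :
  2 * mxnorm G <= 1 ->
  mx_seq_cvg (fun N => \sum_(j < N) G ^+ j) (invmx (1%:M - G)).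
Proof.
move=> G_small eps eps_gt0.
have [N0 N0_gt] : exists N0 : nat, 2 * p%:R ^+ 2 / eps < N0%:R.
  exists (Num.bound (2 * p%:R ^+ 2 / eps)); apply: archi_boundP.
  by rewrite divr_ge0 ?mulr_ge0 ?exprn_ge0 ?ler0n ?ltW.
have two_exp_gt0 N : 0 < (2 : C) ^+ N by rewrite exprn_gt0 ?ltr0n.
exists N0 => N le_N0N i j.
have tail_small : 2 * p%:R ^+ 2 < eps * 2 ^+ N.
  apply: lt_le_trans (_ : eps * N0%:R <= _); first by rewrite [eps * _]mulrC -ltr_pdivrMr.
  by rewrite ler_pM2l // -natrX ler_nat (leq_trans le_N0N) // ltnW // ltn_expl.
(* The tail is invmx (1 - G) G^N, of norm at most 2p * p / 2^N. *)
have -> : (\sum_(j < N) G ^+ j) i j - invmx (1%:M - G) i j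
          = (\sum_(j < N) G ^+ j - invmx (1%:M - G)) i j by rewrite !mxE.
rewrite (neumann_partial_sum G_small) (addrAC (invmx (1%:M - G))) subrr add0r.
apply: le_lt_trans (ler_mxnorm_entry _ i j) _; rewrite mxnormN.
apply: le_lt_trans (ler_mxnormM _ _) _.
rewrite -(ltr_pM2r (two_exp_gt0 N)); apply: le_lt_trans tail_small.
rewrite -mulrA expr2 [X in _ <= X]mulrA.
rewrite ler_pM ?mulr_ge0 ?mxnorm_ge0 ?exprn_ge0 ?ler0n //.
  exact: ler_mxnorm_inv G_small.
exact: mxnorm_exp_le G_small N.
Qed.

Section PQRS.
Variables (C : numClosedFieldType) (m a b : nat).
Variables (S : 'M[C]_m) (P : 'M[C]_(m, b)) (Q : 'M[C]_(a, b)) (R : 'M[C]_(a, m)).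

Let K : 'M[C]_a := 1%:M + R *m adjmx R + Q *m adjmx Q.
Let V : 'M[C]_(a, m) := R + Q *m adjmx P.
Let E : 'M[C]_(m + a + b, m) := col_mx (col_mx 1%:M 0) (adjmx P).
Let E1 : 'M[C]_(m + a + b, m) := col_mx (col_mx 1%:M 0) 0.
Let E2 : 'M[C]_(m + a + b, a) := col_mx (col_mx 0 1%:M) 0.
Let E3 : 'M[C]_(m + a + b, b) := col_mx 0 1%:M.
Let A := A_PQRS S P Q R.
Let B := B_PQRS P Q R.
Let MQ := M_Q Q R.
Let X := X_mx P Q R.

Lemma K_unit : K \in unitmx.
Proof. exact: unitmx_1_add_adj. Qed.

Lemma adjMQ_MQ : adjmx MQ *m MQ = K.
Proof.
by rewrite /MQ /M_Q !adjmx_col !mul_row_col adjmx1 !adjmxK mulmx1 (addrC (R *m _)).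
Qed.

Lemma adjMQ_E : adjmx MQ *m E = V.
Proof. by rewrite /MQ /M_Q !adjmx_col !mul_row_col !adjmxK mulmx1 mulmx0 addr0. Qed.

Lemma B_rows : B = E1 *m adjmx E + E2 *m adjmx MQ.
Proof.
rewrite /B /B_PQRS /block3 /MQ /M_Q /E1 /E2 /E !adjmx_col !adjmx1 !adjmx0 !adjmxK.
rewrite !mul_col_row !mul_col_mx !mul0mx !mul1mx add_block_mx !add_col_mx.
by rewrite !add_row_mx !addr0 !add0r -block_mxEv row_mx0.
Qed.

Lemma adjK : adjmx K = K.
Proof. by rewrite /K !adjmxD !adjmxM !adjmxK adjmx1. Qed.

Lemma adjX : adjmx X = adjmx E - adjmx V *m Kinv Q R *m adjmx MQ.
Proof. by rewrite adjmxB !adjmxM /Kinv adjmx_inv adjK mulmxA. Qed.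

Lemma B_MQ : B *m MQ = E1 *m adjmx V + E2 *m K.
Proof. by rewrite B_rows mulmxDl -!mulmxA adjMQ_MQ -adjMQ_E adjmxM adjmxK. Qed.

Lemma adjMQ_X : adjmx MQ *m X = 0.
Proof.
by rewrite /X /X_mx mulmxBr adjMQ_E !mulmxA adjMQ_MQ mulmxV ?K_unit // mul1mx subrr.
Qed.

Lemma B_X : B *m X = E1 *m (adjmx X *m X).
Proof.
rewrite B_rows mulmxDl -!mulmxA adjMQ_X mulmx0 addr0 adjX mulmxBl.
by rewrite -[_ *m adjmx MQ *m X]mulmxA adjMQ_X mulmx0 subr0.
Qed.

Lemma B_projection : B *m MQ *m Kinv Q R *m adjmx MQ + E1 *m adjmx X = B.
Proof.
rewrite B_MQ adjX mulmxBr !mulmxDl -!mulmxA /Kinv mulKVmx ?K_unit //.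
by rewrite addrC addrA subrK -B_rows.
Qed.

Lemma A_MQ : A *m MQ = 0.
Proof.
rewrite /A /MQ /A_PQRS /M_Q /block3 !mul_block_col mul_row_col !mulmx1 !mul0mx.
rewrite !mulNmx adjmxB adjmxM subrr addr0 !col_mx0 mul0mx mul1mx addr0.
by rewrite addKr addNr col_mx0.
Qed.

Lemma A_X : A *m X = E1 *m S.
Proof.
rewrite /X /X_mx mulmxBr !mulmxA A_MQ !mul0mx subr0.
rewrite /A /A_PQRS /block3 !mul_block_col mul_row_col !mulmx1 !mulmx0 !addr0.
by rewrite !col_mx0 !mul0mx mul1mx addr0 addNr !mul_col_mx mul1mx !mul0mx.
Qed.

Lemma A_E3 : A *m E3 = E3.
Proof.
rewrite /A /E3 /A_PQRS /block3 mul_block_col mul_col_mx.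
by rewrite !mulmx1 !mulmx0 !col_mx0 !add0r.
Qed.

Lemma B_E3 : B *m E3 = E1 *m P + E2 *m Q.
Proof.
rewrite B_rows mulmxDl -!mulmxA /MQ /M_Q /E /E3 !adjmx_col !mul_row_col.
by rewrite !mulmx0 !add0r !adjmxK !mulmx1.
Qed.

Variable c : C.
Let Z := S - c *: (adjmx X *m X).
Let Mc := - A + c *: B.

Lemma Mc_X : Mc *m X = - (E1 *m Z).
Proof.
rewrite mulmxDl mulNmx -scalemxAl A_X B_X /Z [E1 *m (S - _)]mulmxBr -scalemxAr.
by rewrite opprB addrC.
Qed.

Lemma Mc_MQ : Mc *m MQ = c *: (B *m MQ).
Proof. by rewrite mulmxDl mulNmx A_MQ oppr0 add0r -scalemxAl. Qed.

Lemma Mc_E3 : Mc *m E3 = c *: (B *m E3) - E3.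
Proof. by rewrite mulmxDl mulNmx A_E3 -scalemxAl addrC. Qed.

Lemma pencil_unit : c != 0 -> Z \in unitmx -> Mc \in unitmx.
Proof.
move=> c_neq0 Z_unit; pose T := row_mx (row_mx X MQ) E3.
have McT : Mc *m T = block_mx (block_mx (- Z) (c *: adjmx V) 0 (c *: K))
                             (c *: col_mx P Q) 0 (- 1%:M).
  rewrite !mul_mx_row Mc_X Mc_MQ Mc_E3 B_MQ B_E3 /E1 /E2 /E3 !mul_col_mx.
  rewrite !mul1mx !mul0mx !add_col_mx !addr0 !add0r !scale_col_mx !scaler0.
  rewrite !opp_col_mx !oppr0 add_col_mx addr0 add0r block_mxEh; congr row_mx.
  by rewrite -block_mxEh block_mxEv row_mx0 block_mxEh.
have : Mc *m T \in unitmx.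
  rewrite McT unitmxE !det_ublock !unitrM -!unitmxE -!scaleN1r.
  by rewrite !unitmxZ ?unitrN1 ?unitfE // Z_unit K_unit unitmx1.
by rewrite unitmx_mul => /andP[].
Qed.

Lemma scatt_resolvent : c != 0 -> Z \in unitmx ->
  - (invmx Mc *m (- A - c *: B))
    = scatt_lim Q R - (2%:R * c) *: (X *m invmx Z *m adjmx X).
Proof.
move=> c_neq0 Z_unit; set Y := RHS.
have McY : Mc *m Y = (2%:R * c) *: B - Mc.
  rewrite /Y /scatt_lim -/MQ mulmxBr mulmxDr (mulmxN Mc (1%:M : 'M_(_))) mulmx1.
  rewrite -!scalemxAr !mulmxA Mc_MQ Mc_X mulNmx mulmxK // -!scalemxAl scalerA.
  by rewrite mulNmx scalerN opprK -addrA -scalerDr B_projection addrC.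
rewrite -mulmxN opprB -[Y](mulKmx (pencil_unit c_neq0 Z_unit)) McY /Mc; congr (_ *m _).
by rewrite mulr_natl -scalerMnl mulr2n opprD addrACA subrr addr0.
Qed.

End PQRS.

Section SmallFrequency.
Variables (C : archiClosedFieldType) (m a b : nat).
Variables (S : 'M[C]_m) (P : 'M[C]_(m, b)) (Q : 'M[C]_(a, b)) (R : 'M[C]_(a, m)).
Hypothesis S_unit : S \in unitmx.

Let X := X_mx P Q R.
Let M := invmx S *m adjmx X *m X.

Variable k : C.
Hypotheses (k_gt0 : 0 < k) (k_small : k < (2 * (mxnorm M + 1))^-1).

Let G := ('i * k) *: M.

Lemma normr_ik : `|'i * k| = k.
Proof. by rewrite normrM normCi mul1r gtr0_norm. Qed.

Lemma G_small : 2 * mxnorm G <= 1.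
Proof.
rewrite mxnormZ normr_ik mulrA; move: k_small.
rewrite -[_^-1]mul1r ltr_pdivlMr ?mulr_gt0 ?ltr_wpDl ?mxnorm_ge0 // => /ltW.
by apply: le_trans; rewrite mulrCA -mulrA !ler_pM2l ?ltr0n // lerDl.
Qed.

Lemma resolvent_factor : S - ('i * k) *: (adjmx X *m X) = S *m (1%:M - G).
Proof. by rewrite [S *m _]mulmxBr mulmx1 -scalemxAr !mulmxA mulmxV // mul1mx. Qed.

Lemma resolvent_unit : S - ('i * k) *: (adjmx X *m X) \in unitmx.
Proof. by rewrite resolvent_factor unitmx_mul S_unit unitmx_1_sub ?G_small. Qed.

Lemma ik_neq0 : 'i * k != 0.
Proof. by rewrite mulf_neq0 ?neq0Ci ?gt_eqF. Qed.

Lemma scatt_small_unit : - A_PQRS S P Q R + ('i * k) *: B_PQRS P Q R \in unitmx.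
Proof. exact: pencil_unit ik_neq0 resolvent_unit. Qed.

Lemma scatt_small_expansion : scatt S P Q R k =
  scatt_lim Q R - (2%:R * 'i * k) *: (X *m invmx (1%:M - G) *m invmx S *m adjmx X).
Proof.
rewrite /scatt /= (scatt_resolvent ik_neq0 resolvent_unit) resolvent_factor.
by rewrite invmxM ?unitmx_1_sub ?G_small // mulrA !mulmxA.
Qed.

Lemma partial_series_cvg : mx_seq_cvg (partial_series S P Q R k) (invmx (1%:M - G)).
Proof.
have partialE N : partial_series S P Q R k N = \sum_(j < N) G ^+ j.
  by apply: eq_bigr => j _; rewrite exprZmx.
move=> eps /(neumann_cvg G_small) [N0 cvg_N0].
by exists N0 => N /cvg_N0; rewrite partialE.
Qed.

Lemma scatt_small_dist : mxnorm (scatt S P Q R k - scatt_lim Q R) <=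
  k * (2 * (mxnorm X * (2 * m%:R) * mxnorm (invmx S) * mxnorm (adjmx X))).
Proof.
rewrite scatt_small_expansion addrAC subrr add0r mxnormN mxnormZ.
have -> : `|2%:R * 'i * k| = 2 * k by rewrite -mulrA normrM normr_ik normr_nat.
rewrite [X in _ <= X]mulrCA -[X in X <= _]mulrA !ler_pM2l ?ltr0n //.
apply: le_trans (ler_mxnormM _ _) _; rewrite ler_wpM2r ?mxnorm_ge0 //.
apply: le_trans (ler_mxnormM _ _) _; rewrite ler_wpM2r ?mxnorm_ge0 //.
apply: le_trans (ler_mxnormM _ _) _; rewrite ler_wpM2l ?mxnorm_ge0 //.
exact: ler_mxnorm_inv G_small.
Qed.

End SmallFrequency.

Theorem mainTheorem5 (C : archiClosedFieldType) (m a b : nat)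
  (S : 'M[C]_m) (P : 'M[C]_(m, b)) (Q : 'M[C]_(a, b)) (R : 'M[C]_(a, m)) :
  (0 < m)%N -> S \in unitmx -> adjmx S = S ->
  (exists delta : C, 0 < delta /\
     forall k : C, 0 < k -> k < delta ->
       (- A_PQRS S P Q R + ('i * k) *: B_PQRS P Q R) \in unitmx /\
       exists T : 'M[C]_m,
         mx_seq_cvg (partial_series S P Q R k) T /\
         scatt S P Q R k =
           scatt_lim Q R - (2%:R * 'i * k) *:
             (X_mx P Q R *m T *m invmx S *m adjmx (X_mx P Q R)))
  /\ mx_lim_0plus (scatt S P Q R) (scatt_lim Q R).
Proof.
move=> _ S_unit _.
set X := X_mx P Q R; pose delta0 := (2 * (mxnorm (invmx S *m adjmx X *m X) + 1))^-1.
have delta0_gt0 : 0 < delta0 by rewrite invr_gt0 mulr_gt0 ?ltr_wpDl ?mxnorm_ge0.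
split.
  exists delta0; split=> // k k_gt0 k_small.
  split; first exact: scatt_small_unit.
  by eexists; split; [exact: partial_series_cvg | exact: scatt_small_expansion].
move=> eps eps_gt0.
pose c := 2 * (mxnorm X * (2 * m%:R) * mxnorm (invmx S) * mxnorm (adjmx X)).
have c1_gt0 : 0 < c + 1 by rewrite ltr_wpDl ?mulr_ge0 ?mxnorm_ge0 ?ler0n.
have delta1_gt0 : 0 < eps / (c + 1) by rewrite divr_gt0.
have lt_delta k : (k < Num.min delta0 (eps / (c + 1))) = (k < delta0) && (k < eps / (c + 1)).
  by rewrite comparable_lt_min // real_comparable ?gtr0_real.
exists (Num.min delta0 (eps / (c + 1))); split; first by rewrite lt_delta delta0_gt0.
move=> k k_gt0; rewrite lt_delta => /andP[k_small k_lt] i j.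
have -> : scatt S P Q R k i j - scatt_lim Q R i j = (scatt S P Q R k - scatt_lim Q R) i j.
  by rewrite !mxE.
apply: le_lt_trans (ler_mxnorm_entry _ i j) _.
apply: le_lt_trans (scatt_small_dist S_unit k_gt0 k_small) _.
by apply: le_lt_trans (_ : k * (c + 1) < _); rewrite ?ler_pM2l ?lerDl // -ltr_pdivlMr.
Qed.
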